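(* Let $n\ge 3$ be an odd integer and let $P_n$ denote the set of odd primes $p$ with $3\le p\le n$. Let $\pi_{\mathrm{odd}}(n^2)=\pi(n^2)-1$ be the number of odd primes not exceeding $n^2$. Define $\mathrm{dup}=\sum_k \mathrm{dup}_n(k)$, the sum over odd integers $k$ with $1<k\le n^2$, and for $p\in P_n$, $B_p=\dfrac{(n^2-p)\bmod 2p+p}{2p}$. Then $$\pi_{\mathrm{odd}}(n^2)=\mathrm{dup}+\sum_{p\in P_n}B_p-\frac12-\frac{n^2}{2}\left(\sum_{p\in P_n}\frac1p-1\right).$$
   Context: For an integer $a$ and a positive integer $m$, $a \bmod m$ denotes the unique $r\in\{0,\dots,m-1\}$ with $a\equiv r\pmod m$. $\pi(x)$ is the number of primes $\le x$. For a positive integer $n$ and an odd integer $k$, let $m_n(k)$ be the number of distinct primes $p\le n$ dividing $k$, and define $\mathrm{dup}_n(k)=0$ if $m_n(k)=0$ and $\mathrm{dup}_n(k)=m_n(k)-1$ otherwise. *)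

From HB Require Import structures.
From mathcomp Require Import all_boot all_order all_algebra.
Set Implicit Arguments. Unset Strict Implicit. Unset Printing Implicit Defensive.
Import Order.TTheory GRing.Theory Num.Theory.

Definition prime_pi (x : nat) : nat := \sum_(p < x.+1 | prime p) 1.

Definition m_n (n k : nat) : nat := \sum_(p < n.+1 | prime p && (p %| k)) 1.

Definition dup_n (n k : nat) : nat := if m_n n k == 0 then 0 else m_n n k - 1.

Definition dup_total (n : nat) : nat :=
  \sum_(k < (n ^ 2).+1 | odd k && (1 < k)) dup_n n k.

Definition inPn (n p : nat) : bool := [&& prime p, odd p, 3 <= p & p <= n].

Definition B_p (n p : nat) : rat :=
  ((((n ^ 2)%:Z - p%:Z) %% (2 * p)%:Z)%Z + p%:Z)%:~R / (2 * p)%:R.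

From HB Require Import structures.
From mathcomp Require Import all_boot all_order all_algebra.
From mathcomp Require Import zify ring lra.
Import Order.TTheory GRing.Theory Num.Theory.

(* An odd k in (1, n^2] is either divisible by some prime p <= n, or is itself
   a prime exceeding n. Hence the odd primes in (n, n^2] are the odd k with
   m_n(k) = 0, while summing m_n(k) over odd k counts, for each p in P_n, the
   odd multiples of p in (1, n^2], namely 1 + (n^2 - p) div 2p of them. Since
   dup_n(k) = m_n(k) - 1 when m_n(k) > 0, these counts combine into the exact
   identity pi(n^2) + sum_p (n^2 - p) div 2p = 1 + dup + (n^2 - 1)/2, and
   (n^2 - p) div 2p = n^2/2p - B_p turns it into the stated formula. *)

Lemma leq_sqr (n : nat) : n <= n ^ 2.
Proof. by case: n => // n; rewrite expnS expn1 leq_pmulr. Qed.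

Lemma m_n_eq0 (n k : nat) : 1 < k -> k <= n ^ 2 ->
  (m_n n k == 0) = prime k && (n < k).
Proof.
move=> k_gt1 k_le; rewrite /m_n sum_nat_eq0; apply/forallP/andP.
- move=> no_small_pdiv.
  have n_lt_pdiv : n < pdiv k.
    rewrite ltnNge; apply/negP => le_pdiv.
    have := no_small_pdiv (Ordinal (le_pdiv : pdiv k < n.+1)) => /=.
    by rewrite pdiv_prime // pdiv_dvd.
  have pr_k : prime k.
    apply: ltn_pdiv2_prime; first by lia.
    by apply: (leq_ltn_trans k_le); rewrite ltn_exp2r.
  by split=> //; apply: (leq_trans n_lt_pdiv); apply: pdiv_leq; lia.
- move=> [pr_k n_lt_k] p; apply/implyP => /andP [pr_p].
  rewrite dvdn_prime2 // => /eqP p_eq_k.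
  by have := ltn_ord p; rewrite p_eq_k; lia.
Qed.

Lemma count_odd_multiples (p m : nat) : odd p ->
  \sum_(k < m) (odd k && (p %| k)) = (m + p - 1) %/ (2 * p).
Proof.
move=> odd_p; have p_gt0 : 0 < p by case: p odd_p.
elim: m => [|m IHm]; first by rewrite big_ord0 divn_small //; lia.
rewrite big_ord_recr /= IHm.
have -> : m.+1 + p - 1 = (m + p - 1).+1 by lia.
rewrite divnS; last by lia.
have -> : (m + p - 1).+1 = m + p by lia.
rewrite Gauss_dvd ?coprime2n // dvdn2 oddD odd_p addbT negbK.
by rewrite (dvdn_addl _ (dvdnn p)) addnC.
Qed.

Lemma count_odd_gt1_multiples (p N : nat) : odd p -> 1 < p -> p <= N ->
  \sum_(k < N.+1 | odd k && (1 < k)) (p %| k) = ((N - p) %/ (2 * p)).+1.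
Proof.
move=> odd_p p_gt1 p_le.
rewrite big_mkcond /=.
rewrite (eq_bigr (fun k : 'I_N.+1 => (odd k && (p %| k) : nat))); last first.
  move=> [[|[|k]] _] _ //=; first by rewrite dvdn1 gtn_eqF.
  by case: (odd k); case: (p %| k.+2).
rewrite count_odd_multiples //.
have -> : N.+1 + p - 1 = 1 * (2 * p) + (N - p) by lia.
by rewrite divnMDl ?add1n //; lia.
Qed.

Lemma m_nE (n k : nat) : m_n n k = \sum_(p < n.+1) (prime p && (p %| k)).
Proof. by rewrite /m_n big_mkcond; apply: eq_bigr => p _; case: ifP. Qed.

Lemma sum_m_n (n N : nat) : n <= N ->
  \sum_(k < N.+1 | odd k && (1 < k)) m_n n k =
  \sum_(p < n.+1 | inPn n p) ((N - p) %/ (2 * p)).+1.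
Proof.
move=> n_le_N.
under eq_bigr do rewrite m_nE.
rewrite exchange_big /= [RHS]big_mkcond; apply: eq_bigr => p _.
have p_le_N : p <= N by have := ltn_ord p; lia.
rewrite /inPn; case pr_p: (prime p) => /=; last by rewrite big1.
have [odd_p | even_p] := boolP (odd p).
  have p_gt1 := prime_gt1 pr_p; rewrite odd_prime_gt2 //= -ltnS ltn_ord.
  by rewrite -count_odd_gt1_multiples //; apply: eq_bigr.
rewrite big1 // => k /andP [odd_k _].
have -> : (p : nat) = 2 by apply/(prime_oddPn pr_p).
by rewrite dvdn2 odd_k.
Qed.

Lemma prime_decomp_count (n k : nat) : k <= n ^ 2 ->
  prime k = (k == 2) + inPn n k + (odd k && (1 < k)) * (m_n n k == 0) :> nat.
Proof.
move=> k_le; rewrite /inPn.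
have [-> //|k_neq2] := eqVneq k 2.
case pr_k: (prime k) => /=; last first.
  case: (odd k) => //=; case: ltnP => //= k_gt1.
  by rewrite m_n_eq0 // pr_k.
have odd_k : odd k by apply: contra_neqT k_neq2 => /(prime_oddPn pr_k).
have k_gt1 := prime_gt1 pr_k.
by rewrite odd_k odd_prime_gt2 // k_gt1 m_n_eq0 // pr_k /=; case: leqP.
Qed.

Lemma prime_pi_sqr (n : nat) : 1 < n ->
  prime_pi (n ^ 2) = 1 + \sum_(p < n.+1 | inPn n p) 1
     + \sum_(k < (n ^ 2).+1 | odd k && (1 < k)) (m_n n k == 0).
Proof.
move=> n_gt1; rewrite /prime_pi big_mkcond /=.
rewrite (eq_bigr (fun k : 'I_(n ^ 2).+1 =>
   ((k : nat) == 2) + inPn n k + (odd k && (1 < k)) * (m_n n k == 0))); last first.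
  move=> k _; rewrite -prime_decomp_count; first by case: prime.
  by rewrite -ltnS.
rewrite !big_split /=; congr (_ + _ + _).
- have two_lt : 2 < (n ^ 2).+1 by lia.
  rewrite (bigD1 (Ordinal two_lt)) //= big1 // => k k_neq2.
  by rewrite -val_eqE /= in k_neq2; rewrite (negbTE k_neq2).
- rewrite (big_ord_widen_cond _ _ (fun=> 1) (leq_sqr n : n.+1 <= (n ^ 2).+1)).
  rewrite [RHS]big_mkcond; apply: eq_bigr => k _.
  by rewrite /inPn ltnS -!andbA andbb; case: ifP.
- by rewrite [RHS]big_mkcond; apply: eq_bigr => k _; case: (_ && _) => /=; rewrite ?mul1n.
Qed.

Lemma dup_nD1 (n k : nat) : dup_n n k + 1 = m_n n k + (m_n n k == 0).
Proof. by rewrite /dup_n; case: eqP => [->|]; lia. Qed.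

Lemma sum_odd_gt1 (m : nat) : \sum_(k < m) (odd k && (1 < k)) = m./2 - 1.
Proof.
elim: m => [|m IHm]; first by rewrite big_ord0.
rewrite big_ord_recr /= IHm uphalf_half.
by case: m {IHm} => [|[|m]] //=; case: (odd m) => /=; lia.
Qed.

Lemma prime_pi_sqr_dup (n : nat) : 1 < n -> odd n ->
  prime_pi (n ^ 2) + \sum_(p < n.+1 | inPn n p) (n ^ 2 - p) %/ (2 * p) =
  1 + dup_total n + (n ^ 2)./2.
Proof.
move=> n_gt1 odd_n.
have count_odd : \sum_(k < (n ^ 2).+1 | odd k && (1 < k)) 1 = (n ^ 2)./2.
  rewrite big_mkcond (eq_bigr (fun k : 'I__ => (odd k && (1 < k) : nat))).
    by rewrite sum_odd_gt1 /= uphalf_half oddX odd_n orbT /= addKn.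
  by move=> k _; case: (_ && _).
have count_dup : \sum_(k < (n ^ 2).+1 | odd k && (1 < k)) (dup_n n k + 1) =
    \sum_(k < (n ^ 2).+1 | odd k && (1 < k)) (m_n n k + (m_n n k == 0)).
  by apply: eq_bigr => k _; exact: dup_nD1.
rewrite !big_split /= (sum_m_n _ _ (leq_sqr n)) count_odd in count_dup.
rewrite (eq_bigr (fun p : 'I_n.+1 => (n ^ 2 - p) %/ (2 * p) + 1)) in count_dup;
  last by move=> p _; rewrite addn1.
rewrite big_split prime_pi_sqr //= in count_dup *.
rewrite -/(dup_total n) in count_dup.
by rewrite -[RHS]addnA count_dup; lia.
Qed.

Local Open Scope ring_scope.

Lemma B_pE (n p : nat) : (0 < p <= n ^ 2)%N ->
  B_p n p = (n ^ 2)%:R / (2 * p)%:R - ((n ^ 2 - p) %/ (2 * p))%:R.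
Proof.
case/andP=> p_gt0 p_le.
rewrite /B_p subzn // modz_nat -PoszD.
set q := ((n ^ 2 - p) %/ (2 * p))%N; set r := ((n ^ 2 - p) %% (2 * p))%N.
have -> : (n ^ 2 = q * (2 * p) + r + p)%N by rewrite -divn_eq subnK.
have intr_nat m : (Posz m)%:~R = m%:R :> rat by [].
rewrite !intr_nat !natrD !natrM; field.
by rewrite -natrD pnatr_eq0; lia.
Qed.

Lemma sum_B_p (n : nat) :
  \sum_(p < n.+1 | inPn n p) B_p n p =
  (n ^ 2)%:R / 2 * \sum_(p < n.+1 | inPn n p) 1 / (p%:R : rat)
  - (\sum_(p < n.+1 | inPn n p) (n ^ 2 - p) %/ (2 * p))%:R.
Proof.
rewrite mulr_sumr natr_sum -sumrB; apply: eq_bigr => p /and4P [pr_p _ _ p_le_n].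
have p_gt0 := prime_gt0 pr_p; have p_neq0 : p%:R != 0 :> rat by rewrite pnatr_eq0 -lt0n.
rewrite B_pE; last by rewrite p_gt0 (leq_trans p_le_n (leq_sqr n)).
by rewrite natrM; congr (_ - _); field.
Qed.

Local Close Scope ring_scope.

Theorem mainTheorem11 (n : nat) (hn3 : 3 <= n) (hodd : odd n) :
  (((prime_pi (n ^ 2))%:R - 1 : rat) =
    (dup_total n)%:R
    + \sum_(p < n.+1 | inPn n p) B_p n p
    - 1 / 2
    - (n ^ 2)%:R / 2 * (\sum_(p < n.+1 | inPn n p) 1 / (p%:R : rat)  - 1))%R.
Proof.
have count_eq := prime_pi_sqr_dup n (ltnW hn3) hodd.
have sqr_eq : ((n ^ 2)%:R = 2 * ((n ^ 2)./2)%:R + 1 :> rat)%R.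
  by rewrite -[(n ^ 2)%N in LHS]odd_double_half oddX hodd orbT -muln2 natrD natrM mulrC addrC.
move/(congr1 (fun m => m%:R : rat)): count_eq; rewrite !natrD => count_eq.
rewrite sum_B_p mulrBr mulr1.
(* The two n^2/2 * sum 1/p terms cancel, so the identity is linear in [X]. *)
by set X := (_ * \sum_(p < n.+1 | _) _)%R; lra.
Qed.
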